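(* Let $p$ be a prime and $G$ a finite $p$-group in which every non-abelian subgroup $H$ satisfies $C_G(H)\le H$. If $g\in G\setminus\Phi(G)$, then $C_G(g)$ is abelian.
   Context: $\Phi(G)$ denotes the Frattini subgroup of $G$ and $C_G(\cdot)$ centralizers. *)

From mathcomp Require Import all_boot all_fingroup all_solvable.

From mathcomp Require Import all_boot all_fingroup all_solvable.
Local Open Scope group_scope.

(* Since g is not in Phi(G), some maximal subgroup M misses g; in a p-group M
   is normal of index p, so G = M<g> and, by Dedekind's law,
   C_G(g) = H<g> with H = C_G(g) ∩ M.  As g centralizes H, C_G(g) is abelian
   as soon as H is.  Otherwise the hypothesis gives C_G(H) <= H <= M, which
   is impossible because g lies in C_G(H) but not in M. *)

Section MaximalSubgroupSplitting.

Set Implicit Arguments.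
Unset Strict Implicit.

Variable gT : finGroupType.
Implicit Types (G M H : {group gT}) (g : gT).

Lemma maximal_notin_Phi G g :
  g \in G :\: 'Phi(G) -> exists2 M : {group gT}, maximal M G & g \notin M.
Proof.
case/setDP=> gG gPhi.
case: (pickP (fun M : {group gT} => maximal M G && (g \notin M))).
  by move=> M /andP[maxM gM]; exists M.
move=> noM; case/negP: gPhi; apply/bigcapP => M /predU1P[-> // | maxM].
by have := noM M; rewrite maxM => /negbFE.
Qed.

Lemma subcent1_mul_cycle G M g :
  g \in G -> M * <[g]> = G -> 'C_G[g] = ('C_G[g] :&: M) * <[g]>.
Proof.
move=> gG defG; rewrite group_modr ?subcent1_cycle_sub // defG.
by apply/esym/setIidPl; apply: subsetIl.
Qed.

Lemma abelian_mul_cycle_cent H g :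
  H \subset 'C[g] -> abelian (H * <[g]>) = abelian H.
Proof.
by move=> cHg; rewrite abelianM cycle_abelian cycle_subG -sub_cent1 cHg !andbT.
Qed.

End MaximalSubgroupSplitting.

Theorem lemma6p8 (gT : finGroupType) (p : nat) (G : {group gT})
  (pr_p : prime p) (pG : p.-group G)
  (hyp : forall H : {group gT}, H \subset G -> ~~ abelian H -> 'C_G(H) \subset H)
  (g : gT) (gG : g \in G :\: 'Phi(G)) :
  abelian 'C_G[g].
Proof.
have [M maxM gM] := maximal_notin_Phi gG.
have {}gG : g \in G by case/setDP: gG.
have defG : M * <[g]> = G.
  apply: mulg_normal_maximal; rewrite ?cycle_subG //.
  exact: p_maximal_normal pG maxM.
set H := 'C_G[g] :&: M.
have cHg : H \subset 'C[g] by rewrite /H subIset // subsetIr.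
rewrite (subcent1_mul_cycle gG defG) abelian_mul_cycle_cent //.
apply: contraR gM => nabH.
have sHM : H \subset M by apply: subsetIr.
have sHG : H \subset G by rewrite /H -setIA subsetIl.
have cGH_H := hyp [group of H] sHG nabH.
apply: (subsetP sHM); apply: (subsetP cGH_H).
by rewrite inE gG -sub_cent1.
Qed.
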